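(* Let $(S,I_S,\psi_S)$ be a complete and perfect object of $\mathcal{C}_{p^h}$. Then for every $a\in S/I_S$ there is a unique $\widetilde a\in S$ such that $\widetilde a\equiv a \bmod I_S$ and $\psi_S(\widetilde a)=\widetilde a^{\,p^h}$.
   Context: $\mathcal{C}_{p^h}$ (for a prime $p$ and integer $h\ge1$) is the category whose objects are triples $(R,I_R,\psi_R)$ with $R$ a commutative ring, $I_R\subseteq R$ an ideal with $p\in I_R$, and $\psi_R\colon R\to R$ a ring endomorphism such that $\psi_R(x)\equiv x^{p^h}\bmod I_R$ for all $x\in R$. A morphism $(R,I_R,\psi_R)\to(S,I_S,\psi_S)$ is a ring homomorphism $\mu$ with $\mu(I_R)\subseteq I_S$ and $\mu\psi_R=\psi_S\mu$. An object is complete if $R\to\lim_k R/I_R^k$ is an isomorphism, and perfect if $\psi_R$ is an isomorphism with $\psi_R(I_R)=I_R$. *)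

From HB Require Import structures.
From mathcomp Require Import all_boot all_order all_algebra.
Set Implicit Arguments. Unset Strict Implicit. Unset Printing Implicit Defensive.
Import GRing.Theory.
Local Open Scope ring_scope.

Definition is_ideal (R : comPzRingType) (I : R -> Prop) : Prop :=
  [/\ I 0, (forall x y, I x -> I y -> I (x + y)), (forall x, I x -> I (- x))
    & (forall r x, I x -> I (r * x))].

Fixpoint ideal_pow (R : comPzRingType) (I : R -> Prop) (k : nat) : R -> Prop :=
  match k with
  | 0 => fun _ => True
  | k'.+1 => fun x => exists s : seq (R * R),
      (forall ab, ab \in s -> I ab.1 /\ ideal_pow I k' ab.2) /\
      x = \sum_(ab <- s) ab.1 * ab.2
  end.

Definition is_Cph_object (p h : nat) (R : comPzRingType) (I : R -> Prop)
    (psi : {rmorphism R -> R}) : Prop :=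
  [/\ is_ideal I, I (p%:R) & forall x, I (psi x - x ^+ (p ^ h))].

(* Complete: R -> lim_k R/I^k is an isomorphism, i.e. it is injective
   (the intersection of the I^k is 0) and surjective (every compatible
   family of residues, given by representatives x_k with x_m = x_k mod I^k
   for k <= m, is the image of some x). *)
Definition is_complete (R : comPzRingType) (I : R -> Prop) : Prop :=
  (forall x : R, (forall k, ideal_pow I k x) -> x = 0) /\
  (forall xs : nat -> R,
      (forall k m, (k <= m)%N -> ideal_pow I k (xs m - xs k)) ->
      exists x : R, forall k, ideal_pow I k (x - xs k)).

Definition is_perfect (R : comPzRingType) (I : R -> Prop)
    (psi : {rmorphism R -> R}) : Prop :=
  bijective psi /\
  (forall x, I x -> I (psi x)) /\ (forall y, I y -> exists x, I x /\ psi x = y).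

(* Let q = p^h and T := psi^-1 o (x |-> x^q).  The solutions of psi(y) = y^q are
   exactly the fixed points of T, and T moves every element only modulo I.
   Since p lies in I, a = b mod I^k (k >= 1) forces a^q = b^q mod I^(k+1), and psi^-1
   preserves the powers of I, so T is a contraction for the I-adic filtration.  In the
   complete ring S the iterates of T starting from a representative x of the class
   converge to the unique fixed point of T congruent to x modulo I. *)
From mathcomp Require Import all_boot all_order all_algebra.
Set Implicit Arguments. Unset Strict Implicit. Unset Printing Implicit Defensive.
Import GRing.Theory.
Local Open Scope ring_scope.

Section Ideal.
Variables (R : comPzRingType) (J : R -> Prop).
Hypothesis idealJ : is_ideal J.

Lemma ideal0 : J 0.
Proof. by case: idealJ. Qed.

Lemma idealD x y : J x -> J y -> J (x + y).
Proof. by case: idealJ => _ JD _ _; apply: JD. Qed.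

Lemma idealN x : J x -> J (- x).
Proof. by case: idealJ => _ _ JN _; apply: JN. Qed.

Lemma idealMl r x : J x -> J (r * x).
Proof. by case: idealJ => _ _ _ JM; apply: JM. Qed.

Lemma idealMr r x : J x -> J (x * r).
Proof. by rewrite mulrC; apply: idealMl. Qed.

Lemma ideal_sum (X : eqType) (s : seq X) (F : X -> R) :
  (forall i, i \in s -> J (F i)) -> J (\sum_(i <- s) F i).
Proof.
by move=> JF; rewrite big_seq; apply: big_ind => //; [apply: ideal0 | apply: idealD].
Qed.

Lemma ideal_congr_sym a b : J (a - b) -> J (b - a).
Proof. by move=> Jab; rewrite -opprB; apply: idealN. Qed.

Lemma ideal_congr_trans a b c : J (a - b) -> J (b - c) -> J (a - c).
Proof. by move=> Jab Jbc; rewrite -[a](subrK b) -addrA; apply: idealD. Qed.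

Lemma ideal_subrX n a b : J (a - b) -> J (a ^+ n - b ^+ n).
Proof. by rewrite subrXX; apply: idealMr. Qed.

End Ideal.

Section IdealPow.
Variables (R : comPzRingType) (I : R -> Prop).
Hypothesis idealI : is_ideal I.

Lemma ideal_pow_is_ideal k : is_ideal (ideal_pow I k).
Proof.
elim: k => [|k IHk] /=; first by split.
split.
- by exists [::]; rewrite big_nil.
- move=> _ _ [s1 [Hs1 ->]] [s2 [Hs2 ->]]; exists (s1 ++ s2); rewrite big_cat.
  by split=> // ab; rewrite mem_cat => /orP[/Hs1|/Hs2].
- move=> _ [s [Hs ->]]; exists [seq (- ab.1, ab.2) | ab <- s]; split.
    by move=> _ /mapP[ab /Hs[? ?] ->]; split=> //; apply: (idealN idealI).
  by rewrite big_map -sumrN; apply: eq_bigr => ab _; rewrite mulNr.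
- move=> r _ [s [Hs ->]]; exists [seq (r * ab.1, ab.2) | ab <- s]; split.
    by move=> _ /mapP[ab /Hs[? ?] ->]; split=> //; apply: (idealMl idealI).
  by rewrite big_map mulr_sumr; apply: eq_bigr => ab _; rewrite mulrA.
Qed.

Lemma ideal_powS k x : ideal_pow I k.+1 x -> ideal_pow I k x.
Proof.
move=> [s [Hs ->]]; apply: (ideal_sum (ideal_pow_is_ideal k)) => ab /Hs[_ ?].
exact: (idealMl (ideal_pow_is_ideal k)).
Qed.

Lemma ideal_pow_le k m x : (k <= m)%N -> ideal_pow I m x -> ideal_pow I k x.
Proof.
move=> /subnK <-; elim: (m - k)%N => [//|n IHn] Hx.
by apply: IHn; apply: ideal_powS.
Qed.

Lemma ideal_pow1 x : ideal_pow I 1 x <-> I x.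
Proof.
split.
  move=> [s [Hs ->]]; apply: (ideal_sum idealI) => ab /Hs[? _].
  exact: (idealMr idealI).
move=> Ix; exists [:: (x, 1)]; rewrite big_seq1 mulr1.
by split=> // ab; rewrite mem_seq1 => /eqP ->.
Qed.

Lemma ideal_pow_mulS k u d : I u -> ideal_pow I k d -> ideal_pow I k.+1 (u * d).
Proof.
move=> Iu Id; exists [:: (u, d)]; rewrite big_seq1.
by split=> // ab; rewrite mem_seq1 => /eqP ->.
Qed.

(* a^q - b^q = (a - b) * sum_i a^(q-1-i) b^i, and the sum is q b^(q-1) = 0 mod I. *)
Lemma ideal_pow_subrXX q k a b :
    (0 < q)%N -> I q%:R -> (0 < k)%N ->
  ideal_pow I k (a - b) -> ideal_pow I k.+1 (a ^+ q - b ^+ q).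
Proof.
move=> q_gt0 Iq k_gt0 Hab.
have Iab : I (a - b) by apply/ideal_pow1; apply: ideal_pow_le Hab.
rewrite subrXX mulrC; apply: ideal_pow_mulS => //.
have -> : \sum_(i < q) a ^+ (q.-1 - i) * b ^+ i =
    \sum_(i < q) (a ^+ (q.-1 - i) - b ^+ (q.-1 - i)) * b ^+ i + q%:R * b ^+ q.-1.
  rewrite -[q in q%:R]card_ord mulr_natl -sumr_const -big_split /=.
  apply: eq_bigr => i _; have i_le : (i <= q.-1)%N by rewrite -ltnS prednK.
  by rewrite mulrBl -exprD subnK // subrK.
apply: (idealD idealI); last exact: (idealMr idealI).
by apply: (ideal_sum idealI) => i _; apply: (idealMr idealI); apply: (ideal_subrX idealI).
Qed.

End IdealPow.

Lemma ideal_pow_morph (R S : comPzRingType) (I : R -> Prop) (J : S -> Prop)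
    (f : R -> S) :
    nmod_morphism f -> {morph f : x y / x * y} ->
    (forall x, I x -> J (f x)) ->
  forall k x, ideal_pow I k x -> ideal_pow J k (f x).
Proof.
move=> [f0 fD] fM fIJ; elim=> [//|k IHk] _ [s [Hs ->]].
exists [seq (f ab.1, f ab.2) | ab <- s]; split.
  by move=> _ /mapP[ab /Hs[? ?] ->]; split; [apply: fIJ | apply: IHk].
by rewrite big_map (big_morph f fD f0); apply: eq_bigr => ab _; rewrite fM.
Qed.

Definition adic_contraction (R : comPzRingType) (I : R -> Prop) (T : R -> R) :=
  forall k a b, (0 < k)%N -> ideal_pow I k (a - b) -> ideal_pow I k.+1 (T a - T b).

Section AdicFixpoint.
Variables (R : comPzRingType) (I : R -> Prop) (T : R -> R).
Hypotheses (idealI : is_ideal I) (completeI : is_complete I).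
Hypotheses (T_contract : adic_contraction I T) (T_congr : forall z, I (T z - z)).

Lemma adic_fixpoint_unique y z : I (y - z) -> T y = y -> T z = z -> y = z.
Proof.
move=> Iyz Ty Tz; apply/eqP; rewrite -subr_eq0; apply/eqP.
apply: completeI.1 => -[//|k]; elim: k => [|k IHk]; first exact/(ideal_pow1 idealI).
by rewrite -Ty -Tz; apply: T_contract.
Qed.

Lemma iter_adic_step x n : ideal_pow I n.+1 (iter n.+1 T x - iter n T x).
Proof.
elim: n => [|n IHn]; first exact/(ideal_pow1 idealI).
exact: T_contract.
Qed.

Lemma iter_adic_cauchy x k m :
  (k <= m)%N -> ideal_pow I k (iter m T x - iter k T x).
Proof.
have idealIk := ideal_pow_is_ideal idealI k.
move=> /subnK <-; elim: (m - k)%N => [|n IHn]; first by rewrite subrr; apply: ideal0.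
apply: (ideal_congr_trans idealIk) IHn.
by apply: (ideal_pow_le idealI) (iter_adic_step x _); rewrite leqW ?leq_addl.
Qed.

Lemma adic_fixpoint_exists x : exists y, I (y - x) /\ T y = y.
Proof.
have [y Hy] := completeI.2 _ (iter_adic_cauchy x).
exists y; split.
  by apply: (ideal_congr_trans idealI _ (T_congr x)); apply/(ideal_pow1 idealI)/Hy.
apply/eqP; rewrite -subr_eq0; apply/eqP; apply: completeI.1 => -[//|k].
apply: (ideal_congr_trans (ideal_pow_is_ideal idealI k.+1) (b := iter k.+2 T x)).
  by apply: (ideal_powS idealI); apply: T_contract (Hy k.+1).
by apply: (ideal_congr_sym (ideal_pow_is_ideal idealI k.+1)); apply: (ideal_powS idealI).
Qed.

End AdicFixpoint.

Theorem corollary2p2 (p h : nat) (S : comPzRingType) (I : S -> Prop)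
    (psi : {rmorphism S -> S}) :
  prime p -> (1 <= h)%N ->
  is_Cph_object p h I psi -> is_complete I -> is_perfect I psi ->
  forall x : S, exists y : S,
    (I (y - x) /\ psi y = y ^+ (p ^ h)) /\
    (forall z : S, I (z - x) -> psi z = z ^+ (p ^ h) -> z = y).
Proof.
move=> p_prime h_gt0 [idealI Ip psi_congr] completeI [[g psiK gK] [_ psi_onto]] x.
pose q := (p ^ h)%N; pose T z := g (z ^+ q).
have g_add := can2_nmod_morphism psiK gK.
have g_mul := (can2_monoid_morphism psiK gK).2.
have gI z : I z -> I (g z) by move=> /psi_onto[u [Iu <-]]; rewrite psiK.
have Iq : I q%:R by rewrite /q -(prednK h_gt0) expnS natrM mulrC; apply: (idealMl idealI).
have gB : {morph g : a b / a - b}.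
  by move=> a b; apply: (can_inj psiK); rewrite rmorphB !gK.
have T_contract : adic_contraction I T.
  move=> k a b k_gt0 Hab; rewrite /T -gB; apply: (ideal_pow_morph g_add g_mul gI).
  by apply: (ideal_pow_subrXX idealI); rewrite // expn_gt0 prime_gt0.
have T_congr z : I (T z - z).
  rewrite /T -{2}(psiK z) -gB; apply: gI.
  exact: (ideal_congr_sym idealI (psi_congr z)).
have fixT z : (T z = z) <-> (psi z = z ^+ q).
  by split=> [Tz|Pz]; [rewrite -{1}Tz /T gK | rewrite /T -Pz psiK].
have [y [Iyx Ty]] := adic_fixpoint_exists idealI completeI T_contract T_congr x.
exists y; split; first by split=> //; apply/fixT.
move=> z Izx /fixT Tz; apply: (adic_fixpoint_unique idealI completeI T_contract) Tz Ty.
exact: (ideal_congr_trans idealI Izx (ideal_congr_sym idealI Iyx)).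
Qed.
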